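(* Let $f_1,\dots,f_M:\mathbb{R}\to[0,1]$ be cumulative distribution functions and $w_1,\dots,w_M\in\mathbb{R}$ real weights (not necessarily positive), and let $F(x)=\sum_{i=1}^M w_i f_i(x)$. For $1\le M'<M$ write $F(x)=F_{M'}(x)+R_{M'}(x)$ with $F_{M'}(x)=\sum_{i=1}^{M'} w_i f_i(x)$ and $R_{M'}(x)=\sum_{i=M'+1}^M w_i f_i(x)$, and set \[\epsilon_-=\sum_{i=M'+1}^M [w_i]_-\le 0,\qquad \epsilon_+=\sum_{i=M'+1}^M [w_i]_+\ge 0.\] Then for every $x$, $R_{M'}(x)\in[\epsilon_-,\epsilon_+]$. Moreover, assuming $F$ and $F_{M'}$ are continuous and strictly increasing with quantile functions $F^{-1}$, $F_{M'}^{-1}$, for $p\in(0,1)$ with $p+\epsilon_-,\,p+\epsilon_+\in(0,1)$, \[F^{-1}(p+\epsilon_-)\le F_{M'}^{-1}(p)\le F^{-1}(p+\epsilon_+).\]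
   Context: $[w]_+=\max(w,0)$ and $[w]_-=\min(w,0)$. For a continuous strictly increasing function $G$, $G^{-1}(q)$ denotes the unique $x$ with $G(x)=q$. Such mixtures with signed weights arise from sparse grid quadrature. *)

From Stdlib Require Import Reals.
From Coquelicot Require Import Coquelicot.
Open Scope R_scope.

Definition is_cdf (f : R -> R) : Prop :=
  (forall x y, x <= y -> f x <= f y) /\
  (forall x, filterlim f (at_right x) (locally (f x))) /\
  is_lim f m_infty 0 /\
  is_lim f p_infty 1 /\
  (forall x, 0 <= f x <= 1).

Definition pos_part (w : R) : R := Rmax w 0.
Definition neg_part (w : R) : R := Rmin w 0.

Definition mixture (w : nat -> R) (f : nat -> R -> R) (a b : nat) (x : R) : R :=
  sum_n_m (fun i => w i * f i x) a b.

Definition strictly_increasing (G : R -> R) : Prop :=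
  forall x y, x < y -> G x < G y.

(* x = G^{-1}(q): the (for strictly increasing G, unique) x with G(x) = q. *)
Definition is_quantile (G : R -> R) (q x : R) : Prop := G x = q.

(* The tail R_{M'} is a weighted sum of values in [0,1], so each term
   w_i f_i(x) lies between [w_i]_- and [w_i]_+; summing gives
   eps_- <= R_{M'} <= eps_+.  At q = F_{M'}^{-1}(p) this reads
   p + eps_- <= F(q) <= p + eps_+, and since F is strictly increasing the
   quantiles of F at the two ends bracket q. *)

From Stdlib Require Import Reals Lra Lia.
From Coquelicot Require Import Coquelicot.
Open Scope R_scope.

Lemma sum_n_m_le_loc (a b : nat -> R) (n m : nat) :
  (forall k, (n <= k <= m)%nat -> a k <= b k) ->
  sum_n_m a n m <= sum_n_m b n m.
Proof.
  intros Hab.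
  rewrite (sum_n_m_ext_loc a (fun k => Rmin (a k) (b k))).
  - apply sum_n_m_le; intros k; apply Rmin_r.
  - intros k Hk; rewrite Rmin_left; auto.
Qed.

Lemma neg_part_le_mul (w t : R) : 0 <= t <= 1 -> neg_part w <= w * t.
Proof. intros Ht; unfold neg_part; apply Rmin_case_strong; intros; nra. Qed.

Lemma mul_le_pos_part (w t : R) : 0 <= t <= 1 -> w * t <= pos_part w.
Proof. intros Ht; unfold pos_part; apply Rmax_case_strong; intros; nra. Qed.

Lemma mixture_bounds (w : nat -> R) (f : nat -> R -> R) (a b : nat) (x : R) :
  (forall i, (a <= i <= b)%nat -> 0 <= f i x <= 1) ->
  sum_n_m (fun i => neg_part (w i)) a b <= mixture w f a b x
  <= sum_n_m (fun i => pos_part (w i)) a b.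
Proof.
  intros Hf; unfold mixture; split; apply sum_n_m_le_loc; intros i Hi.
  - exact (neg_part_le_mul _ _ (Hf i Hi)).
  - exact (mul_le_pos_part _ _ (Hf i Hi)).
Qed.

Lemma mixture_split (w : nat -> R) (f : nat -> R -> R) (a m b : nat) (x : R) :
  (a <= S m)%nat -> (m <= b)%nat ->
  mixture w f a b x = mixture w f a m x + mixture w f (S m) b x.
Proof. intros Ham Hmb; unfold mixture; exact (sum_n_m_Chasles _ a m b Ham Hmb). Qed.

Lemma strictly_increasing_le_reflect (G : R -> R) (x y : R) :
  strictly_increasing G -> G x <= G y -> x <= y.
Proof.
  intros HG Hxy; apply Rnot_lt_le; intros Hyx; apply HG in Hyx; lra.
Qed.

Lemma quantile_le (G : R -> R) (q1 q2 x1 x2 : R) :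
  strictly_increasing G -> is_quantile G q1 x1 -> is_quantile G q2 x2 ->
  q1 <= q2 -> x1 <= x2.
Proof.
  unfold is_quantile; intros HG H1 H2 Hq.
  apply (strictly_increasing_le_reflect G _ _ HG); lra.
Qed.

Theorem proposition2 (M M' : nat) (w : nat -> R) (f : nat -> R -> R)
  (Hcdf : forall i, (1 <= i <= M)%nat -> is_cdf (f i))
  (HM' : (1 <= M' < M)%nat) :
  let F := mixture w f 1 M in
  let FM := mixture w f 1 M' in
  let RM := mixture w f (S M') M in
  let eps_minus := sum_n_m (fun i => neg_part (w i)) (S M') M in
  let eps_plus := sum_n_m (fun i => pos_part (w i)) (S M') M in
  (forall x, eps_minus <= RM x <= eps_plus) /\
  ((forall x, continuous F x) -> strictly_increasing F ->
   (forall x, continuous FM x) -> strictly_increasing FM ->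
   forall p, 0 < p < 1 -> 0 < p + eps_minus < 1 -> 0 < p + eps_plus < 1 ->
   forall qm qp qFM,
     is_quantile F (p + eps_minus) qm ->
     is_quantile FM p qFM ->
     is_quantile F (p + eps_plus) qp ->
     qm <= qFM <= qp).
Proof.
  intros F FM RM em ep.
  assert (HR : forall x, em <= RM x <= ep).
  { intros x; apply mixture_bounds; intros i Hi.
    destruct (Hcdf i ltac:(lia)) as (_ & _ & _ & _ & H01); apply H01. }
  split; [exact HR |].
  (* Continuity and the range conditions on p only serve to make the
     quantiles exist; here they are given, so monotonicity of F suffices. *)
  intros _ HF _ _ p _ _ _ qm qp qFM Hqm HqFM Hqp.
  assert (HFq : is_quantile F (p + RM qFM) qFM).
  { unfold is_quantile, FM in HqFM; unfold is_quantile, F, RM.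
    rewrite (mixture_split _ _ 1 M' M) by lia.
    now rewrite HqFM. }
  specialize (HR qFM).
  split; [apply (quantile_le F _ _ _ _ HF Hqm HFq)
        | apply (quantile_le F _ _ _ _ HF HFq Hqp)]; lra.
Qed.
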